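(* Let $1\le k\le n$, let $\mu\in\mathbb{N}^n$ be packed of type $(k,n)$ (i.e. $\mu_i\ne0$ for $i\le k$ and $\mu_i=0$ for $i>k$), and let $\nu\in\mathbb{N}^n$ be such that $\nu_{i_0}=0$ for some $i_0\le k$. Then $\mu\not\preceq\nu$, $E^*_\mu(\widetilde\nu)=0$ and $f^*_\mu(\widetilde\nu)=0$.
   Context: Polynomials are in $x_1,\dots,x_n$ over $\mathbb{Q}(q,t)$. For $\mu\in\mathbb{N}^n$ let $k_i(\mu)=\#\{j<i:\mu_j>\mu_i\}+\#\{j>i:\mu_j\ge\mu_i\}$ and $\widetilde\mu=(q^{\mu_1}t^{-k_1(\mu)},\dots,q^{\mu_n}t^{-k_n(\mu)})$. For $\mu\in\mathbb{N}^n$, $|\mu|=d$, $E^*_\mu$ is the unique polynomial of degree at most $d$ with coefficient of $x^\mu$ equal to $1$ and $E^*_\mu(\widetilde\nu)=0$ for all $\nu\in\mathbb{N}^n$, $|\nu|\le d$, $\nu\ne\mu$. $S_n$ acts on compositions by $\sigma\cdot\mu=(\mu_{\sigma^{-1}(1)},\dots,\mu_{\sigma^{-1}(n)})$ and on polynomials by permuting variables; $s_i=(i,i+1)$; $T_i=t-\frac{tx_i-x_{i+1}}{x_i-x_{i+1}}(1-s_i)$; $T_\sigma=T_{i_1}\cdots T_{i_\ell}$ for a reduced word. For a composition $\mu$ with sorted partition $\lambda$, $\sigma_\mu$ is the shortest permutation with $\sigma_\mu(\lambda)=\mu$, and $f^*_\mu=T_{\sigma_\mu}E^*_\lambda$.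 For $\mu,\nu\in\mathbb{N}^n$, $\mu\preceq\nu$ means there exists $\pi\in S_n$ with $\mu_i\le\nu_{\pi(i)}$ for all $i$, and $\mu_i<\nu_{\pi(i)}$ whenever $i>\pi(i)$. *)

From HB Require Import structures.
From mathcomp Require Import all_boot all_order all_algebra all_fingroup.
From mathcomp Require Import fraction.
From mathcomp Require Import mpoly.
From Stdlib Require Import ClassicalEpsilon.

Set Implicit Arguments.
Unset Strict Implicit.
Unset Printing Implicit Defensive.

Import GRing.Theory.

(* The base field Q(q,t), realised as the fraction field of Q[q][t]. *)
Notation QqtK := {fraction {poly {poly rat}}}.

Definition qpar : QqtK := @FracField.tofrac _ (('X : {poly rat})%:P)%R.
Definition tpar : QqtK := @FracField.tofrac _ ('X : {poly {poly rat}})%R.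

(* Compositions mu in N^n are multi-indices 'X_{1..n}; indices are 0-based:
   paper index i (1..n) corresponds to the ordinal i-1. *)

Definition kstat (n : nat) (mu : 'X_{1..n}) (i : 'I_n) : nat :=
  #|[set j : 'I_n | ((j < i) && (mu i < mu j)) || ((i < j) && (mu i <= mu j))]|.

Definition tilde (n : nat) (mu : 'X_{1..n}) : 'I_n -> QqtK :=
  fun i => (qpar ^+ (mu i) * tpar ^- (kstat mu i))%R.

(* E is the interpolation polynomial E^*_mu : degree at most |mu|,
   coefficient of x^mu equal to 1, vanishing at tilde nu for |nu| <= |mu|, nu <> mu. *)
Definition is_Estar (n : nat) (mu : 'X_{1..n}) (E : {mpoly QqtK[n]}) : Prop :=
  [/\ msize E <= (mdeg mu).+1,
      (E@_mu)%R = 1%R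
    & forall nu : 'X_{1..n}, mdeg nu <= mdeg mu -> nu != mu -> E.@[tilde nu] = 0%R].

Definition act_comp (n : nat) (s : 'S_n) (mu : 'X_{1..n}) : 'X_{1..n} :=
  [multinom mu ((s^-1)%g i) | i < n].

(* Coxeter length = number of inversions *)
Definition perm_length (n : nat) (s : 'S_n) : nat :=
  #|[set p : 'I_n * 'I_n | (p.1 < p.2) && (s p.2 < s p.1)]|.

(* the simple transposition s_i = (i, i+1) (0-based i, requires i+1 < n) *)
Definition sperm (n : nat) (i : nat) : 'S_n :=
  match (insub i : option 'I_n), (insub i.+1 : option 'I_n) with
  | Some a, Some b => tperm a b
  | _, _ => 1%g
  end.

(* the permutation s_{i1} o s_{i2} o ... o s_{il} (composition of maps) of a word *)
Definition word_perm (n : nat) (w : seq nat) : 'S_n :=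
  foldr (fun i s => (s * sperm n i)%g) 1%g w.

Definition is_reduced_word (n : nat) (s : 'S_n) (w : seq nat) : Prop :=
  [/\ all (fun i => i.+1 < n) w, word_perm n w = s & size w = perm_length s].

Definition sorted_part (n : nat) (mu : 'X_{1..n}) : 'X_{1..n} :=
  [multinom nth 0 (sort geq [seq mu i | i <- enum 'I_n]) i | i < n].

Definition shortest_perm (n : nat) (lam mu : 'X_{1..n}) (s : 'S_n) : Prop :=
  act_comp s lam = mu /\
  forall s' : 'S_n, act_comp s' lam = mu -> perm_length s <= perm_length s'.

(* the variable x_i (0-based), or 0 if out of range *)
Definition xvar (n : nat) (i : nat) : {mpoly QqtK[n]} :=
  match (insub i : option 'I_n) with Some j => 'X_j | None => 0%R end.

(* g = T_i f, where T_i = t - (t x_i - x_{i+1})/(x_i - x_{i+1}) (1 - s_i),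
   written after clearing the denominator x_i - x_{i+1}. *)
Definition Hecke_spec (n : nat) (i : nat) (f g : {mpoly QqtK[n]}) : Prop :=
  ((xvar n i - xvar n i.+1) * g =
   tpar%:MP * (xvar n i - xvar n i.+1) * f
   - (tpar%:MP * xvar n i - xvar n i.+1) * (f - msym (sperm n i) f))%R.

Definition Hecke (n : nat) (i : nat) (f : {mpoly QqtK[n]}) : {mpoly QqtK[n]} :=
  epsilon (inhabits 0%R) (Hecke_spec i f).

Definition Hecke_word (n : nat) (w : seq nat) (f : {mpoly QqtK[n]}) : {mpoly QqtK[n]} :=
  foldr (fun i g => Hecke i g) f w.

Definition is_fstar (n : nat) (mu : 'X_{1..n}) (F : {mpoly QqtK[n]}) : Prop :=
  exists (E : {mpoly QqtK[n]}) (s : 'S_n) (w : seq nat),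
    [/\ is_Estar (sorted_part mu) E,
        shortest_perm (sorted_part mu) mu s,
        is_reduced_word s w
      & F = Hecke_word w E].

Definition preceq (n : nat) (mu nu : 'X_{1..n}) : Prop :=
  exists pi : 'S_n, forall i : 'I_n,
    mu i <= nu (pi i) /\ (pi i < i -> mu i < nu (pi i)).

(* The heart of the matter is the extra vanishing of interpolation polynomials
   (Knop-Sahi).  A polynomial F of degree at most d in n variables vanishing at
   all points tilde nu with |nu| <= d is zero: by induction on n it vanishes on
   the hyperplane x_1 = t^(1-n), which contains the points tilde (0, nu'); so
   F = (x_1 - t^(1-n)) G, and G composed with the q-shift
   (x_1, ..., x_n) |-> (q x_n, x_1, ..., x_(n-1)), which maps tilde nu to
   tilde (nu_n + 1, nu_1, ..., nu_(n-1)), vanishes at all tilde nu with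
   |nu| <= d - 1, hence is zero by induction on d.  The same double induction,
   applied to E*_mu, which vanishes at every other point of size at most |mu|,
   shows that E*_mu(tilde nu) = 0 whenever nu_i0 = 0 while mu_1, ..., mu_i0
   are positive.

   For f*_mu = T_w E*_lambda, lambda is packed of the same type, so sigma_mu
   preserves {1, ..., k} and its reduced words avoid s_k.  Each T_i with i <> k
   preserves vanishing at the points tilde nu with a zero among nu_1, ..., nu_k:
   at such a point either nu_i = nu_(i+1), and then t tilde nu_i = tilde nu_(i+1)
   kills the symmetrised term of T_i, or s_i (tilde nu) = tilde (s_i nu) and
   s_i nu again has such a zero.  Finally mu is not below nu, as the zero part
   nu_i0 would have to dominate strictly a zero part mu_j with j > k >= i0. *)

From HB Require Import structures.
From mathcomp Require Import all_boot all_order all_algebra all_fingroup.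
From mathcomp Require Import fraction.
From mathcomp Require Import mpoly.
From mathcomp Require Import ring zify.
From Stdlib Require Import ClassicalEpsilon.

Set Implicit Arguments.
Unset Strict Implicit.
Unset Printing Implicit Defensive.

Import GRing.Theory.

Definition swapn (p l : nat) : nat := if l == p then p.+1 else if l == p.+1 then p else l.

Section SwapAdjacent.

Variable p : nat.
Implicit Types (l j : nat).

Lemma swapnK : involutive (swapn p).
Proof.
move=> l; rewrite /swapn; case: (l =P p) => [->|neq_lp].
  by rewrite (gtn_eqF (ltnSn p)) eqxx.
by case: (l =P p.+1) => [->|neq_lSp]; rewrite ?eqxx // (introF eqP neq_lp) (introF eqP neq_lSp).
Qed.

Lemma swapn_ltn n l : p.+1 < n -> l < n -> swapn p l < n.
Proof. by rewrite /swapn; case: (l =P p); case: (l =P p.+1); lia. Qed.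

Lemma swapn_ltE l j : ~~ ((l == p) || (l == p.+1)) || ~~ ((j == p) || (j == p.+1)) ->
  (swapn p l < j) = (l < swapn p j).
Proof.
by rewrite /swapn; case: (l =P p); case: (l =P p.+1); case: (j =P p); case: (j =P p.+1); lia.
Qed.

End SwapAdjacent.

Section AdjacentTransposition.

Variables (n i : nat) (lt_in : i.+1 < n).

Lemma sperm_tperm : sperm n i = tperm (Ordinal (ltnW lt_in)) (Ordinal lt_in).
Proof.
rewrite /sperm (insubT (fun k => k < n) (ltnW lt_in)) (insubT (fun k => k < n) lt_in).
by congr tperm; apply: val_inj.
Qed.

Lemma val_sperm (j : 'I_n) : sperm n i j = swapn i j :> nat.
Proof.
rewrite sperm_tperm /swapn; case: tpermP => [->|->|neq_ja neq_jb] /=; first by rewrite eqxx.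
  by rewrite (gtn_eqF (ltnSn i)) eqxx.
have /negPf-> : nat_of_ord j != i by apply/eqP => eq_ji; apply/neq_ja/val_inj.
by have /negPf-> : nat_of_ord j != i.+1 by apply/eqP => eq_ji; apply/neq_jb/val_inj.
Qed.

End AdjacentTransposition.

Lemma word_perm_cat n u w : word_perm n (u ++ w) = (word_perm n w * word_perm n u)%g.
Proof. by elim: u => [|i u IH] /=; rewrite ?mulg1 // IH mulgA. Qed.

Section ReducedWords.

Variable n : nat.
Implicit Types (s : 'S_n) (p : 'I_n * 'I_n) (w : seq nat).

Definition is_inversion s p : bool := (p.1 < p.2) && (s p.2 < s p.1).

(* The letter [i], applied after [s], exchanges the images of the pair [p]. *)
Definition swaps_at s i p : bool :=
  (p.1 < p.2) && ([&& s p.1 == i :> nat & s p.2 == i.+1 :> nat]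
                  || [&& s p.1 == i.+1 :> nat & s p.2 == i :> nat]).

Fixpoint crossings p w : nat :=
  if w is i :: w' then swaps_at (word_perm n w') i p + crossings p w' else 0.

Lemma perm_length_sum s : perm_length s = \sum_p is_inversion s p.
Proof.
rewrite /perm_length -sum1dep_card big_mkcond /=.
by apply: eq_bigr => p _; rewrite /is_inversion; case: ifP.
Qed.

Lemma is_inversion_mulsperm s i p : i.+1 < n ->
  is_inversion (s * sperm n i)%g p <= is_inversion s p + swaps_at s i p.
Proof.
move=> lt_in; rewrite /is_inversion /swaps_at !permM !val_sperm //.
case lt_p: (p.1 < p.2) => //=.
have : s p.1 != s p.2 :> nat by apply/eqP => /val_inj/perm_inj eq_p; rewrite eq_p ltnn in lt_p.
rewrite /swapn; set a := nat_of_ord (s p.1); set b := nat_of_ord (s p.2).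
by case: (a =P i); case: (a =P i.+1); case: (b =P i); case: (b =P i.+1); lia.
Qed.

Lemma swaps_at_uniq s i p p' : swaps_at s i p -> swaps_at s i p' -> p = p'.
Proof.
have s_inj x y : s x = s y :> nat -> x = y by move/val_inj/perm_inj.
case: p p' => x1 x2 [y1 y2] /andP[/= lt_x sx] /andP[/= lt_y sy].
have [[-> ->]//|[eq1 eq2]] : (x1 = y1 /\ x2 = y2) \/ (x1 = y2 /\ x2 = y1).
  move: sx sy => /orP[]/andP[/eqP sx1 /eqP sx2] /orP[]/andP[/eqP sy1 /eqP sy2];
    [left|right|right|left]; split; apply: s_inj; congruence.
by move: lt_x lt_y; rewrite eq1 eq2; lia.
Qed.

Lemma sum_swaps_at_le1 s i : \sum_p swaps_at s i p <= 1.
Proof.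
rewrite (eq_bigr (fun p => if swaps_at s i p then 1 else 0)) => [|p _]; last by case: swaps_at.
rewrite -big_mkcond sum1_card; apply/card_le1_eqP => p q sp sq; exact: swaps_at_uniq sq sp.
Qed.

Lemma is_inversion_word_le w p :
  all (fun i => i.+1 < n) w -> is_inversion (word_perm n w) p <= crossings p w.
Proof.
elim: w => [|i w IH] /=; first by rewrite /is_inversion !perm1; case: ltngtP.
case/andP=> lt_in all_w; apply: leq_trans (is_inversion_mulsperm _ _ lt_in) _.
by rewrite addnC leq_add2l IH.
Qed.

Lemma sum_crossings_le w : \sum_p crossings p w <= size w.
Proof.
elim: w => [|i w IH] /=; first by rewrite big1.
by rewrite big_split -add1n leq_add ?sum_swaps_at_le1.
Qed.

Lemma reduced_word_crossings s w :
  is_reduced_word s w -> forall p, crossings p w = is_inversion s p.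
Proof.
case=> all_w <- size_w p; apply/eqP; rewrite eq_sym.
have le_inv q : is_inversion (word_perm n w) q <= crossings q w
                  ?= iff (is_inversion (word_perm n w) q == crossings q w :> nat).
  exact/leqif_eq/is_inversion_word_le.
have [le_sum eq_sum] := leqif_sum (P := xpredT) (fun q _ => le_inv q).
have /forallP/(_ p)// : [forall q, is_inversion (word_perm n w) q == crossings q w :> nat].
by rewrite -eq_sum eqn_leq le_sum -perm_length_sum -size_w sum_crossings_le.
Qed.

Lemma crossings_cat p u w : crossings p w <= crossings p (u ++ w).
Proof. by elim: u => [|i u IH] //=; apply: leq_trans IH (leq_addl _ _). Qed.

Lemma word_perm_block k u (z : 'I_n) : all (fun i => i.+1 < n) u -> all (fun i => i.+1 != k) u ->
  (word_perm n u z < k) = (z < k).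
Proof.
elim: u => [|i u IH] /=; first by rewrite perm1.
case/andP=> lt_in all_u /andP[neq_ik all_neq]; rewrite permM val_sperm // -(IH all_u all_neq).
by move: neq_ik; rewrite /swapn; set y := nat_of_ord _; case: (y =P i); case: (y =P i.+1); lia.
Qed.

Lemma reduced_word_block_avoid k s w : is_reduced_word s w ->
  (forall x : 'I_n, (s x < k) = (x < k)) -> all (fun i => i.+1 != k) w.
Proof.
move=> red_w s_block; apply/negPn/negP; rewrite -has_predC => has_k.
move: red_w s_block; case: (split_find has_k) => b u v /negPn/eqP eq_bk.
rewrite has_predC negbK => avoid_u red_w s_block; case: (red_w).
rewrite cat_rcons all_cat /= word_perm_cat => /and3P[lt_u lt_bn _] def_s _.
pose sv := word_perm n v.
pose x := (sv^-1)%g (Ordinal (ltnW lt_bn)); pose y := (sv^-1)%g (Ordinal lt_bn).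
have sE z : s z = word_perm n u (sperm n b (sv z)) by rewrite -def_s !permM.
have sx_ge : (s x < k) = false.
  by rewrite sE permKV word_perm_block // val_sperm //= /swapn eqxx eq_bk ltnn.
have sy_lt : (s y < k) = true.
  rewrite sE permKV word_perm_block // val_sperm //= /swapn (gtn_eqF (ltnSn b)) eqxx.
  by rewrite -eq_bk ltnSn.
have lt_yx : y < x by move: sx_ge sy_lt; rewrite !s_block; lia.
have : 0 < crossings (y, x) (rcons u b ++ v).
  rewrite cat_rcons; apply: leq_trans (crossings_cat _ _ _) => /=.
  by rewrite /swaps_at /= lt_yx !permKV /= eqxx (gtn_eqF (ltnSn b)) eqxx.
rewrite (reduced_word_crossings red_w) /is_inversion /= lt_yx.
by move: sx_ge sy_lt; lia.
Qed.

End ReducedWords.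

Lemma sorted_geq_nth_gt0 (s : seq nat) i : sorted geq s -> i < size s ->
  (0 < nth 0 s i) = (i < count (leq 1) s).
Proof.
elim: s i => [|x s IH] i //= sorted_xs lt_is.
have sorted_s : sorted geq s by case: s sorted_xs {IH lt_is} => //= y s /andP[].
have ge_x : all (geq x) s := order_path_min (fun a b c h1 h2 => leq_trans h2 h1) sorted_xs.
case: x ge_x sorted_xs => [|x] ge_x _; last by case: i lt_is => [|i] //= lt_is; rewrite IH.
have s0 y : y \in s -> y = 0 by move/(allP ge_x); rewrite /geq /= leqn0 => /eqP.
rewrite (eq_in_count (a2 := pred0)) => [|y /s0-> //]; rewrite count_pred0.
by case: i lt_is => [|i] //= lt_is; rewrite [nth _ _ _]s0 ?mem_nth.
Qed.

Lemma count_iota_ltn k n : k <= n -> count (fun j => j < k) (iota 0 n) = k.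
Proof. by move=> le_kn; rewrite -size_filter (filter_iota_ltn 0 le_kn) size_iota. Qed.

Lemma sorted_part_packed n k (mu : 'X_{1..n}) : k <= n ->
  (forall i : 'I_n, (0 < mu i) = (i < k)) -> forall j : 'I_n, (0 < sorted_part mu j) = (j < k).
Proof.
move=> le_kn mu_pos j; rewrite /sorted_part mnmE sorted_geq_nth_gt0.
- rewrite count_sort count_map (eq_count (a2 := fun i : 'I_n => val i < k)) => [|i];
    last exact: mu_pos.
  by rewrite -(count_map val (fun j => j < k)) val_enum_ord count_iota_ltn.
- by apply: sort_sorted => a b; apply: leq_total.
- by rewrite size_sort size_map size_enum_ord.
Qed.

Lemma act_comp_block n k (s : 'S_n) (lam mu : 'X_{1..n}) :
  (forall i : 'I_n, (0 < lam i) = (i < k)) -> (forall i : 'I_n, (0 < mu i) = (i < k)) ->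
  act_comp s lam = mu -> forall x : 'I_n, (s x < k) = (x < k).
Proof. by move=> lam_pos mu_pos eq_mu x; rewrite -mu_pos -eq_mu /act_comp mnmE permK lam_pos. Qed.

Local Open Scope ring_scope.

Lemma qpar_neq0 : qpar != 0.
Proof. by rewrite /qpar tofrac_eq0 polyC_eq0 polyX_eq0. Qed.

Lemma tpar_neq0 : tpar != 0.
Proof. by rewrite /tpar tofrac_eq0 polyX_eq0. Qed.

Lemma qpar_tpar_tofrac a b :
  qpar ^+ a * tpar ^+ b = @FracField.tofrac _ ((('X : {poly rat}) ^+ a)%:P * 'X ^+ b).
Proof. by rewrite /qpar /tpar rmorphM /= !rmorphXn /= -rmorphXn. Qed.

Lemma qpar_tpar_exp_inj a b c e :
  qpar ^+ a * tpar ^+ b = qpar ^+ c * tpar ^+ e -> a = c /\ b = e.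
Proof.
rewrite !qpar_tpar_tofrac => /eqP; rewrite tofrac_eq => /eqP eq_qt.
have := congr1 (fun p : {poly {poly rat}} => p`_b) eq_qt.
rewrite !coefCM !coefXn eqxx mulr1.
case: eqP => [<-|_]; last by move=> /eqP; rewrite mulr0 expf_eq0 polyX_eq0 andbF.
by rewrite mulr1 => /(congr1 (fun p : {poly rat} => size p)); rewrite !size_polyXn => -[].
Qed.

Lemma qpar_tparV_exp_inj a b c e :
  qpar ^+ a * tpar ^- b = qpar ^+ c * tpar ^- e -> a = c /\ b = e.
Proof.
have tX_neq0 m : tpar ^+ m != 0 by rewrite expf_neq0 ?tpar_neq0.
have clear_den x m r : x * tpar ^- m * (tpar ^+ m * tpar ^+ r) = x * tpar ^+ r.
  by rewrite -mulrA mulKf.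
move=> /(congr1 ( *%R^~ (tpar ^+ b * tpar ^+ e))); rewrite clear_den.
by rewrite [tpar ^+ b * _]mulrC clear_den => /qpar_tpar_exp_inj[-> ->].
Qed.

Definition scons (T : Type) (c : T) (y : nat -> T) : nat -> T :=
  fun i => if i is j.+1 then y j else c.

Definition sbehead (T : Type) (y : nat -> T) : nat -> T := fun i => y i.+1.

Section PolynomialFunctions.

Context {R : comNzRingType}.

(* Points are infinite sequences, so that the number [n] of relevant
   coordinates can vary along an induction; [polyfun n d F] says that [F]
   is a polynomial of total degree at most [d] in the first [n] coordinates. *)
Inductive polyfun (n : nat) : nat -> ((nat -> R) -> R) -> Prop :=
| polyfunC d c : polyfun n d (fun _ => c)
| polyfunX d i : (i < n)%N -> (0 < d)%N -> polyfun n d (fun x => x i)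
| polyfunD d F G : polyfun n d F -> polyfun n d G -> polyfun n d (fun x => F x + G x)
| polyfunM d1 d2 F G :
    polyfun n d1 F -> polyfun n d2 G -> polyfun n (d1 + d2) (fun x => F x * G x)
| polyfun_ext d F G : polyfun n d F -> F =1 G -> polyfun n d G.

Lemma polyfun_leq n d d' F : (d <= d')%N -> polyfun n d F -> polyfun n d' F.
Proof.
move=> le_dd' PF; elim: PF d' le_dd' => {d F}
  [d c|d i ??|d F G _ IF _ IG|d1 d2 F G _ IF _ IG|d F G _ IF eFG] d' le_dd'.
- exact: polyfunC.
- by apply: polyfunX => //; apply: leq_trans le_dd'.
- by apply: polyfunD; [apply: IF|apply: IG].
- have le_d1d' : (d1 <= d')%N by apply: leq_trans (leq_addr _ _) le_dd'.
  rewrite -(subnKC le_d1d'); apply: polyfunM; first exact: IF.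
  by apply: IG; rewrite leq_subRL.
- exact: polyfun_ext (IF _ le_dd') eFG.
Qed.

Lemma polyfun_eq_coord n d F x y :
  polyfun n d F -> (forall i, (i < n)%N -> x i = y i) -> F x = F y.
Proof.
move=> PF exy; elim: PF => {d F}
  [d c|d i lt_in _|d F G _ IF _ IG|d1 d2 F G _ IF _ IG|d F G _ IF eFG] //=.
- exact: exy.
- by rewrite IF IG.
- by rewrite IF IG.
- by rewrite -!eFG.
Qed.

Lemma polyfun0_const n F x y : polyfun n 0 F -> F x = F y.
Proof.
move E0 : 0%N => d PF; elim: PF E0 => {d F}
  [d c|d i _ lt0d|d F G _ IF _ IG|d1 d2 F G _ IF _ IG|d F G _ IF eFG] d0 //=.
- by rewrite -d0 in lt0d.
- by rewrite IF ?IG.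
- by move: d0 => /esym/eqP; rewrite addn_eq0 => /andP[/eqP/esym/IF-> /eqP/esym/IG->].
- by rewrite -!eFG IF.
Qed.

Lemma polyfun_comp n n' d G (s : (nat -> R) -> nat -> R) :
  (forall i, (i < n)%N -> polyfun n' 1 (fun y => s y i)) ->
  polyfun n d G -> polyfun n' d (fun y => G (s y)).
Proof.
move=> Ps PG; elim: PG => {d G}
  [d c|d i lt_in lt0d|d F G _ IF _ IG|d1 d2 F G _ IF _ IG|d F G _ IF eFG].
- exact: polyfunC.
- exact: polyfun_leq lt0d (Ps _ lt_in).
- exact: polyfunD.
- exact: polyfunM.
- by apply: polyfun_ext IF _ => y; rewrite eFG.
Qed.

Lemma polyfun_scale n d c F : polyfun n d F -> polyfun n d (fun x => c * F x).
Proof. by rewrite -[d]add0n; apply: polyfunM (polyfunC _ _ _). Qed.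

Lemma polyfun_sum n d (T : eqType) (r : seq T) (F : T -> (nat -> R) -> R) :
  (forall a, a \in r -> polyfun n d (F a)) -> polyfun n d (fun x => \sum_(a <- r) F a x).
Proof.
elim: r => [|a r IH] PF; first by apply: polyfun_ext (polyfunC _ _ 0) _ => x; rewrite big_nil.
apply: polyfun_ext (polyfunD (PF a (mem_head _ _)) (IH _)) _ => [b br|x];
  last by rewrite big_cons.
by apply: PF; rewrite in_cons br orbT.
Qed.

Lemma polyfun_prod n (T : Type) (r : seq T) (F : T -> (nat -> R) -> R) (d : T -> nat) :
  (forall a, polyfun n (d a) (F a)) ->
  polyfun n (\sum_(a <- r) d a) (fun x => \prod_(a <- r) F a x).
Proof.
move=> PF; elim: r => [|a r IH].
  by rewrite big_nil; apply: polyfun_ext (polyfunC _ _ 1) _ => x; rewrite big_nil.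
by rewrite big_cons; apply: polyfun_ext (polyfunM (PF a) IH) _ => x; rewrite big_cons.
Qed.

Lemma polyfun_coordX n i m : (i < n)%N -> polyfun n m (fun x => x i ^+ m).
Proof.
move=> lt_in; elim: m => [|m IH].
  by apply: polyfun_ext (polyfunC _ _ 1) _ => x; rewrite expr0.
rewrite -add1n; apply: polyfun_ext (polyfunM (polyfunX lt_in (ltn0Sn 0)) IH) _ => x.
by rewrite exprS.
Qed.

Lemma polyfun_meval n d (E : {mpoly R[n]}) :
  (msize E <= d.+1)%N -> polyfun n d (fun x => E.@[fun i : 'I_n => x i]).
Proof.
move=> szE; apply: polyfun_ext => [|x]; last by rewrite mevalE.
apply: polyfun_sum => m mE; apply: polyfun_scale.
apply: polyfun_leq (_ : mdeg m <= d)%N _; first by rewrite -ltnS (leq_trans (msize_mdeg_lt mE)).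
by rewrite mdegE; apply: polyfun_prod => i; apply: polyfun_coordX.
Qed.

Lemma polyfun_scons_behead n d c F :
  polyfun n d F -> polyfun n d (fun x => F (scons c (sbehead x))).
Proof.
by apply: polyfun_comp => -[|i] lt_in; [apply: polyfunC | apply: (polyfunX (d := 1))].
Qed.

Lemma polyfun_scons m d c F :
  polyfun m.+1 d F -> polyfun m d (fun y => F (scons c y)).
Proof. by apply: polyfun_comp => -[|i] lt_im; [apply: polyfunC | apply: polyfunX]. Qed.

Lemma polyfun_divdiff n d c F : (0 < n)%N -> polyfun n d F ->
  exists2 G, polyfun n d.-1 G & forall x, F x = F (scons c (sbehead x)) + (x 0%N - c) * G x.
Proof.
move=> n_gt0; elim=> {d F} [d a|d [|i] lt_in _|d F G _ [F1 PF1 eF] _ [G1 PG1 eG]|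
    d1 d2 F G PF [F1 PF1 eF] PG [G1 PG1 eG]|d F G _ [F1 PF1 eF] eFG].
- by exists (fun=> 0); [apply: polyfunC | move=> x; rewrite mulr0 addr0].
- by exists (fun=> 1); [apply: polyfunC | move=> x /=; rewrite mulr1 addrC subrK].
- by exists (fun=> 0); [apply: polyfunC | move=> x; rewrite mulr0 addr0].
- exists (fun x => F1 x + G1 x); first exact: polyfunD.
  by move=> x; rewrite [F x]eF [G x]eG mulrDr addrACA.
- pose F' x := F (scons c (sbehead x)).
  have PF' : polyfun n d1 F' := polyfun_scons_behead c PF.
  case: d1 => [|d1] in PF PF1 eF PF' *.
    exists (fun x => F' x * G1 x); first by rewrite add0n; apply: polyfunM PF' PG1.
    by move=> x; rewrite /F' [F x](polyfun0_const x (scons c (sbehead x)) PF) [G x]eG; ring.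
  case: d2 => [|d2] in PG PG1 eG *.
    exists (fun x => F1 x * G x); first by rewrite addn0 /= -[d1]addn0; apply: polyfunM PF1 PG.
    by move=> x; rewrite [G x](polyfun0_const x (scons c (sbehead x)) PG) [F x]eF; ring.
  exists (fun x => F1 x * G x + F' x * G1 x).
    by apply: polyfunD; [rewrite addSn; apply: polyfunM | rewrite addnS; apply: polyfunM].
  by move=> x; rewrite /F' [F x]eF [G x]eG; ring.
- by exists F1 => // x; rewrite -!eFG.
Qed.

End PolynomialFunctions.

Definition kstatn (n : nat) (nu : nat -> nat) (i : nat) : nat :=
  \sum_(j < n) (((j < i) && (nu i < nu j)) || ((i < j) && (nu i <= nu j)))%N.

Definition tilden (n : nat) (nu : nat -> nat) : nat -> QqtK :=
  fun i => qpar ^+ nu i * tpar ^- kstatn n nu i.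

Definition sizen (n : nat) (nu : nat -> nat) : nat := (\sum_(j < n) nu j)%N.

Definition raise_comp (m : nat) (r : nat -> nat) : nat -> nat := scons (r m).+1 r.

Definition lower_comp (m : nat) (nu : nat -> nat) : nat -> nat :=
  fun i => if i == m then (nu 0%N).-1 else nu i.+1.

Definition raise_pt (m : nat) (y : nat -> QqtK) : nat -> QqtK := scons (qpar * y m) y.

Definition lower_pt (m : nat) (x : nat -> QqtK) : nat -> QqtK :=
  fun i => if i == m then x 0%N / qpar else x i.+1.

Section TildeCoordinates.

Variable n : nat.
Implicit Types (nu mu : nat -> nat) (i : nat).

Lemma eq_kstatn nu mu i :
  (forall j, (j < n)%N -> nu j = mu j) -> (i < n)%N -> kstatn n nu i = kstatn n mu i.
Proof. by move=> eq_numu lt_in; apply: eq_bigr => j _; rewrite !eq_numu. Qed.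

Lemma eq_tilden nu mu i :
  (forall j, (j < n)%N -> nu j = mu j) -> (i < n)%N -> tilden n nu i = tilden n mu i.
Proof. by move=> eq_numu lt_in; rewrite /tilden (eq_kstatn eq_numu lt_in) eq_numu. Qed.

Lemma eq_sizen nu mu : (forall j, (j < n)%N -> nu j = mu j) -> sizen n nu = sizen n mu.
Proof. by move=> eq_numu; apply: eq_bigr => j _; rewrite eq_numu. Qed.

End TildeCoordinates.

Section TildeShifts.

Variable m : nat.
Implicit Types (nu r : nat -> nat) (i j : nat).

Lemma kstatn0 nu : nu 0%N = 0%N -> kstatn m.+1 nu 0 = m.
Proof.
move=> nu0; rewrite /kstatn big_ord_recl /= nu0 add0n.
by rewrite (eq_bigr (fun=> 1%N)) ?sum_nat_const ?card_ord ?muln1.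
Qed.

Lemma kstatn_scons0 nu j : kstatn m.+1 (scons 0%N nu) j.+1 = kstatn m nu j.
Proof.
rewrite /kstatn big_ord_recl /= add0n; apply: eq_bigr => l _.
by rewrite /bump /= !add1n !ltnS.
Qed.

Lemma tilden_scons0 nu i : tilden m.+1 (scons 0%N nu) i = scons (tpar ^- m) (tilden m nu) i.
Proof.
case: i => [|i]; last by rewrite /tilden /= kstatn_scons0.
by rewrite /tilden kstatn0 // expr0 mul1r.
Qed.

Lemma sizen_scons0 nu : sizen m.+1 (scons 0%N nu) = sizen m nu.
Proof. by rewrite /sizen big_ord_recl. Qed.

Lemma kstatn_raise0 r : kstatn m.+1 (raise_comp m r) 0 = kstatn m.+1 r m.
Proof.
rewrite /kstatn big_ord_recl big_ord_recr /= ltnn /= add0n addn0.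
apply: eq_bigr => j _; rewrite add0n ltn_ord /=.
by rewrite [(m < j)%N]ltnNge (ltnW (ltn_ord j)) /= orbF.
Qed.

Lemma kstatn_raiseS r j : (j < m)%N -> kstatn m.+1 (raise_comp m r) j.+1 = kstatn m.+1 r j.
Proof.
move=> lt_jm; rewrite /kstatn big_ord_recl big_ord_recr /= ltnS ltnNge (ltnW lt_jm) lt_jm /=.
by rewrite orbF addnC.
Qed.

Lemma tilden_raise r i :
  (i < m.+1)%N -> tilden m.+1 (raise_comp m r) i = raise_pt m (tilden m.+1 r) i.
Proof.
case: i => [|j] lt_jm; first by rewrite /tilden /raise_pt /= kstatn_raise0 exprS mulrA.
by rewrite /tilden /raise_pt /= kstatn_raiseS.
Qed.

Lemma sizen_raise r : sizen m.+1 (raise_comp m r) = (sizen m.+1 r).+1.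
Proof. by rewrite /sizen big_ord_recl [in RHS]big_ord_recr /= addSn addnC. Qed.

Lemma raise_lower_comp nu i :
  (0 < nu 0%N)%N -> (i < m.+1)%N -> raise_comp m (lower_comp m nu) i = nu i.
Proof.
move=> nu0 lt_im; case: i lt_im => [|j] lt_jm /=; first by rewrite /lower_comp eqxx prednK.
by rewrite /lower_comp ltn_eqF.
Qed.

Lemma lower_raise_comp r i : lower_comp m (raise_comp m r) i = r i.
Proof. by rewrite /lower_comp; case: eqP => [->|]. Qed.

Lemma sizen_lower nu : (0 < nu 0%N)%N -> sizen m.+1 nu = (sizen m.+1 (lower_comp m nu)).+1.
Proof.
by move=> nu0; rewrite -sizen_raise; apply: eq_sizen => i lt_im; rewrite raise_lower_comp.
Qed.

Lemma raise_lower_pt x i : (i < m.+1)%N -> raise_pt m (lower_pt m x) i = x i.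
Proof.
case: i => [|j] lt_jm; rewrite /raise_pt /lower_pt /=; last by rewrite ltn_eqF.
by rewrite eqxx mulrC divfK ?qpar_neq0.
Qed.

Lemma tilden_raise0_neq r : tilden m.+1 (raise_comp m r) 0 != tpar ^- m.
Proof.
apply/eqP; rewrite -[tpar ^- m]mul1r -(expr0 qpar).
by case/qpar_tparV_exp_inj.
Qed.

End TildeShifts.

Lemma polyfun_raise_pt m d (G : (nat -> QqtK) -> QqtK) :
  polyfun m.+1 d G -> polyfun m.+1 d (fun y => G (raise_pt m y)).
Proof.
apply: polyfun_comp => -[|i] lt_im; last exact: polyfunX (ltnW lt_im) (ltn0Sn 0).
by apply: polyfun_ext (polyfun_scale qpar (polyfunX (ltnSn m) (ltn0Sn 0))) _.
Qed.

Lemma polyfun_quotient m d F :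
  polyfun m.+1 d.+1 F -> (forall y, F (scons (tpar ^- m) y) = 0) ->
  exists2 G, polyfun m.+1 d G &
    [/\ forall y, F y = (y 0%N - tpar ^- m) * G y
      & forall r, G (raise_pt m (tilden m.+1 r)) = 0 <-> F (tilden m.+1 (raise_comp m r)) = 0].
Proof.
move=> PF F0; have [G PG eFG] := polyfun_divdiff (tpar ^- m) (ltn0Sn m) PF.
have {}eFG y : F y = (y 0%N - tpar ^- m) * G y by rewrite eFG F0 add0r.
exists G => //; split=> // r.
rewrite eFG (polyfun_eq_coord PG (@tilden_raise m r)); split=> [->|/eqP]; first by rewrite mulr0.
by rewrite mulf_eq0 subr_eq0 (negbTE (tilden_raise0_neq m r)) => /eqP.
Qed.

Theorem polyfun_eq0_on_tilden n d F :
  polyfun n d F -> (forall nu, (sizen n nu <= d)%N -> F (tilden n nu) = 0) ->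
  forall x, F x = 0.
Proof.
elim: n d F => [|m IHm] d F PF F0 x.
  by rewrite (polyfun_eq_coord (y := tilden 0 (fun=> 0%N)) PF) // F0 // /sizen big_ord0.
elim: d F PF F0 x => [|d IHd] F PF F0 x.
  by rewrite (polyfun0_const x (tilden m.+1 (fun=> 0%N)) PF) F0 // /sizen big1.
have F0_scons y : F (scons (tpar ^- m) y) = 0.
  apply: IHm (polyfun_scons _ PF) _ y => nu le_nu.
  rewrite -(polyfun_eq_coord PF (fun i _ => tilden_scons0 m nu i)).
  by apply: F0; rewrite sizen_scons0.
have [G PG [eFG G0_raise]] := polyfun_quotient PF F0_scons.
have G0 y : G (raise_pt m y) = 0.
  apply: IHd (polyfun_raise_pt PG) _ y => r le_r.
  by apply/G0_raise/F0; rewrite sizen_raise.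
by rewrite eFG -(polyfun_eq_coord PG (@raise_lower_pt m x)) G0 mulr0.
Qed.

Theorem polyfun_extra_vanishing n d mu F :
  sizen n mu = d -> polyfun n d F ->
  (forall nu, (sizen n nu <= d)%N -> ~ (forall i, (i < n)%N -> nu i = mu i) ->
     F (tilden n nu) = 0) ->
  forall nu i0, (i0 < n)%N -> nu i0 = 0%N -> (forall j, (j <= i0)%N -> (0 < mu j)%N) ->
  F (tilden n nu) = 0.
Proof.
case: n => [|m] //; elim: d mu F => [|d IHd] mu F szmu PF F0 nu i0 lt_i0m nu_i0 mu_pos.
  by move: szmu (mu_pos 0%N (leq0n _)); rewrite /sizen big_ord_recl; case: (mu _).
have mu0 := mu_pos 0%N (leq0n _).
have F0_scons y : F (scons (tpar ^- m) y) = 0.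
  apply: polyfun_eq0_on_tilden (polyfun_scons _ PF) _ y => nu' le_nu'.
  rewrite -(polyfun_eq_coord PF (fun i _ => tilden_scons0 m nu' i)).
  apply: F0; first by rewrite sizen_scons0.
  by move=> /(_ 0%N (ltn0Sn m)) /= eq0; rewrite -eq0 in mu0.
have [G PG [eFG G0_raise]] := polyfun_quotient PF F0_scons.
have [nu0|nu0_pos] := posnP (nu 0%N).
  rewrite (polyfun_eq_coord (y := scons (tpar ^- m) (sbehead (tilden m.+1 nu))) PF) ?F0_scons //.
  by case=> [|j] _ //; rewrite /tilden nu0 kstatn0 // expr0 mul1r.
case: i0 => [|i1] in lt_i0m nu_i0 mu_pos *; first by rewrite nu_i0 in nu0_pos.
have raise_lower_nu i :
    (i < m.+1)%N -> tilden m.+1 (raise_comp m (lower_comp m nu)) i = tilden m.+1 nu i.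
  by apply: eq_tilden => j; apply: raise_lower_comp.
rewrite -(polyfun_eq_coord PF raise_lower_nu); apply/G0_raise.
apply: (IHd (lower_comp m mu) _ _ (polyfun_raise_pt PG) _ (lower_comp m nu) i1 (ltnW lt_i0m)).
- by move: szmu; rewrite (sizen_lower m mu0) => -[].
- move=> r le_r neq_r_mu; apply/G0_raise/F0; first by rewrite sizen_raise.
  move=> eq_r_mu; apply: neq_r_mu => i lt_im; rewrite -(lower_raise_comp m r i) /lower_comp.
  by case: eqP => [//|/eqP neq_im]; rewrite eq_r_mu // ltn_neqAle neq_im -ltnS.
- by rewrite /lower_comp ltn_eqF.
- by move=> j le_ji1; rewrite /lower_comp ltn_eqF ?mu_pos // (leq_ltn_trans le_ji1).
Qed.

Definition mnm_fun n (nu : 'X_{1..n}) : nat -> nat :=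
  fun i => if insub i is Some j then nu j else 0%N.

Section MultinomialBridge.

Variable n : nat.
Implicit Types (nu mu : 'X_{1..n}).

Lemma mnm_funE nu (j : 'I_n) : mnm_fun nu j = nu j.
Proof. by rewrite /mnm_fun valK. Qed.

Lemma mnm_fun_multinom (v : nat -> nat) i :
  (i < n)%N -> mnm_fun [multinom v j | j < n] i = v i.
Proof. by move=> lt_in; rewrite /mnm_fun insubT mnmE. Qed.

Lemma tilde_tilden nu (i : 'I_n) : tilde nu i = tilden n (mnm_fun nu) i.
Proof.
rewrite /tilde /tilden /kstat mnm_funE -sum1dep_card big_mkcond /=.
by congr (_ * tpar ^- _); apply: eq_bigr => j _; rewrite !mnm_funE; case: ifP.
Qed.

Lemma sizen_mdeg nu : sizen n (mnm_fun nu) = mdeg nu.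
Proof. by rewrite /sizen mdegE; apply: eq_bigr => j _; rewrite mnm_funE. Qed.

Lemma meval_tilden (E : {mpoly QqtK[n]}) nu :
  E.@[fun i : 'I_n => tilden n (mnm_fun nu) i] = E.@[tilde nu].
Proof. by apply: meval_eq => i; rewrite tilde_tilden. Qed.

Lemma Estar_extra_vanishing mu E nu (i0 : 'I_n) : is_Estar mu E ->
  nu i0 = 0%N -> (forall j : 'I_n, (j <= i0)%N -> (0 < mu j)%N) -> E.@[tilde nu] = 0.
Proof.
case=> szE _ E0 nu_i0 mu_pos; rewrite -meval_tilden.
have PE := polyfun_meval szE.
apply: (polyfun_extra_vanishing (sizen_mdeg mu) PE _ (ltn_ord i0)); last 2 first.
- by rewrite mnm_funE.
- move=> j le_ji0; have lt_jn := leq_ltn_trans le_ji0 (ltn_ord i0).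
  by rewrite -[j]/(nat_of_ord (Ordinal lt_jn)) mnm_funE mu_pos.
move=> v le_v neq_v_mu; pose mv := [multinom v i | i < n].
have eq_v_mv i : (i < n)%N -> tilden n (mnm_fun mv) i = tilden n v i.
  by apply: eq_tilden => j lt_jn; rewrite mnm_fun_multinom.
rewrite -(polyfun_eq_coord PE eq_v_mv) meval_tilden; apply: E0.
  by rewrite -sizen_mdeg (eq_sizen (mu := v)) // => j lt_jn; rewrite mnm_fun_multinom.
by apply/eqP => eq_mv_mu; apply: neq_v_mu => i lt_in; rewrite -eq_mv_mu mnm_fun_multinom.
Qed.

End MultinomialBridge.

Section TranspositionDivisibility.

Context {R : comNzRingType} {n : nat}.
Implicit Types (f : {mpoly R[n]}) (s : 'S_n).

Lemma msymXU s (j : 'I_n) : msym s ('X_j : {mpoly R[n]}) = 'X_(s j).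
Proof. by rewrite /msym mmapX mmap1U. Qed.

Lemma meval_msym s f (v : 'I_n -> R) : (msym s f).@[v] = f.@[fun j => v (s j)].
Proof.
rewrite -(comp_mpoly_id (msym s f)) msym_mPo comp_mpoly_meval.
by apply: meval_eq => j; rewrite !tnth_mktuple mevalXU.
Qed.

Lemma msym_tperm_subr_dvd (a b : 'I_n) f :
  exists h, f - msym (tperm a b) f = ('X_a - 'X_b) * h.
Proof.
pose D : {mpoly R[n]} := 'X_a - 'X_b.
pose dvd p := exists h, p - msym (tperm a b) p = D * h.
have dvd_msymE p h : p - msym (tperm a b) p = D * h -> msym (tperm a b) p = p - D * h.
  by move=> <-; rewrite opprB addrC subrK.
have dvdD p q : dvd p -> dvd q -> dvd (p + q).
  by move=> [h1 e1] [h2 e2]; exists (h1 + h2); rewrite msymD mulrDr -e1 -e2; ring.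
have dvdM p q : dvd p -> dvd q -> dvd (p * q).
  move=> [h1 /dvd_msymE e1] [h2 /dvd_msymE e2].
  by exists (p * h2 + h1 * (q - D * h2)); rewrite msymM e1 e2; ring.
have dvdZ c p : dvd p -> dvd (c *: p).
  by move=> [h /dvd_msymE e]; exists (c%:MP * h); rewrite msymZ -!mul_mpolyC e; ring.
have dvd1 : dvd 1 by exists 0; rewrite msym1 subrr mulr0.
have dvdX j : dvd 'X_j.
  rewrite /dvd msymXU; case: tpermP => [->|->|_ _]; first by exists 1; rewrite mulr1.
    by exists (-1); rewrite /D; ring.
  by exists 0; rewrite subrr mulr0.
rewrite [f]mpolyE; apply: (big_ind dvd) => [|p q|m _]; last apply: dvdZ.
- by exists 0; rewrite msym0 subrr mulr0.
- exact: dvdD.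
rewrite mpolyXE_id; apply: (big_ind dvd) => [//|p q|j _]; first exact: dvdM.
by elim: (m j) => [|k IH]; rewrite ?expr0 // exprS; apply: dvdM.
Qed.

End TranspositionDivisibility.

Section KstatnSwap.

Variable p : nat.
Implicit Types (nu : nat -> nat).

Lemma kstatn_adj_eq n nu : (p.+1 < n)%N -> nu p = nu p.+1 ->
  kstatn n nu p = (kstatn n nu p.+1).+1.
Proof.
move=> lt_pn eq_nu; rewrite /kstatn -[in RHS]addn1.
have -> : 1%N = (\sum_(l < n) (l == p.+1 :> nat))%N.
  rewrite (bigD1 (Ordinal lt_pn)) //= eqxx big1 // => l neq_l.
  by case: eqP => // eq_l; case/eqP: neq_l; apply: val_inj.
rewrite -big_split /=; apply: eq_bigr => l _; rewrite eq_nu.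
case: (ltngtP l p.+1) => [lt_lSp|gt_lSp|eq_lSp] /=; rewrite ?addn0 ?orbF.
- case: (ltngtP l p) => [//|gt_lp|eq_lp]; first by move: lt_lSp gt_lp; lia.
  by rewrite eq_lp eq_nu ltnn.
- by rewrite [(l < p)%N]ltnNge (ltnW (ltnW gt_lSp)).
- by rewrite eq_lSp leqnn orbT.
Qed.

Lemma kstatn_swapn n nu j : (p.+1 < n)%N -> nu p != nu p.+1 -> (j < n)%N ->
  kstatn n (fun l => nu (swapn p l)) j = kstatn n nu (swapn p j).
Proof.
move=> lt_pn neq_nu lt_jn; rewrite /kstatn.
pose h (l : 'I_n) : 'I_n := Ordinal (swapn_ltn lt_pn (ltn_ord l)).
have inj_h : injective h.
  by move=> a b /(congr1 (swapn p \o val)) /=; rewrite !swapnK => /val_inj.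
rewrite (reindex_inj inj_h) /=; apply: eq_bigr => l _; rewrite swapnK.
have [both_adj|not_both] :=
  boolP (((nat_of_ord l == p) || (nat_of_ord l == p.+1)) && ((j == p) || (j == p.+1))).
  move: both_adj neq_nu; rewrite /swapn.
  by case/andP => /orP[] /eqP -> /orP[] /eqP ->; rewrite ?eqxx ?(gtn_eqF (ltnSn p)); lia.
rewrite negb_and in not_both; rewrite (swapn_ltE not_both) -(swapn_ltE (j := l)) //.
by rewrite orbC.
Qed.

End KstatnSwap.

Section HeckeOperator.

Variables (n i : nat) (lt_in : (i.+1 < n)%N).
Let a : 'I_n := Ordinal (ltnW lt_in).
Let b : 'I_n := Ordinal lt_in.

Lemma xvar_ord : xvar n i = 'X_a /\ xvar n i.+1 = 'X_b.
Proof.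
rewrite /xvar (insubT (fun k => k < n)%N (ltnW lt_in)) (insubT (fun k => k < n)%N lt_in).
by split; congr 'X_ _; apply: val_inj.
Qed.

Lemma Hecke_specP (f : {mpoly QqtK[n]}) : Hecke_spec i f (Hecke i f).
Proof.
apply: epsilon_spec; have [h eq_h] := msym_tperm_subr_dvd a b f.
exists (tpar%:MP * f - (tpar%:MP * xvar n i - xvar n i.+1) * h).
rewrite /Hecke_spec sperm_tperm eq_h; case: xvar_ord => -> ->; ring.
Qed.

Lemma meval_Hecke (f : {mpoly QqtK[n]}) (x : 'I_n -> QqtK) :
  (x a - x b) * (Hecke i f).@[x] =
  tpar * (x a - x b) * f.@[x] - (tpar * x a - x b) * (f.@[x] - f.@[fun j => x (sperm n i j)]).
Proof.
have := congr1 (meval x) (Hecke_specP f); case: xvar_ord => -> ->.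
by rewrite !(mevalM, mevalB, mevalC, mevalXU, meval_msym).
Qed.

Lemma mnm_fun_adj (nu : 'X_{1..n}) : mnm_fun nu i = nu a /\ mnm_fun nu i.+1 = nu b.
Proof. by rewrite -!mnm_funE. Qed.

Lemma tilde_adj_neq (nu : 'X_{1..n}) : tilde nu a != tilde nu b.
Proof.
rewrite !tilde_tilden /tilden /=; apply/eqP => /qpar_tparV_exp_inj[eq_nu].
by rewrite kstatn_adj_eq // => /esym/n_Sn.
Qed.

Lemma tilde_adj_eq (nu : 'X_{1..n}) : nu a = nu b -> tpar * tilde nu a = tilde nu b.
Proof.
case: (mnm_fun_adj nu) => <- <- eq_nu; rewrite !tilde_tilden /tilden /= kstatn_adj_eq //.
by rewrite eq_nu exprSr invfM mulrCA [tpar * _]mulrCA mulfV ?tpar_neq0 ?mulr1.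
Qed.

Lemma tilde_sperm (nu : 'X_{1..n}) (j : 'I_n) : nu a != nu b ->
  tilde nu (sperm n i j) = tilde [multinom mnm_fun nu (swapn i l) | l < n] j.
Proof.
case: (mnm_fun_adj nu) => <- <- neq_nu; rewrite !tilde_tilden.
have eq_swap l : (l < n)%N ->
    mnm_fun [multinom mnm_fun nu (swapn i l) | l < n] l = mnm_fun nu (swapn i l).
  exact: (@mnm_fun_multinom n (fun l => mnm_fun nu (swapn i l))).
by rewrite (eq_tilden eq_swap (ltn_ord j)) /tilden (val_sperm lt_in) kstatn_swapn.
Qed.

End HeckeOperator.

Definition vanishes_at_zero_parts n k (f : {mpoly QqtK[n]}) : Prop :=
  forall (nu : 'X_{1..n}) (i0 : 'I_n), (i0 < k)%N -> nu i0 = 0%N -> f.@[tilde nu] = 0.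

Lemma Hecke_vanishing n k i (f : {mpoly QqtK[n]}) : (i.+1 < n)%N -> i.+1 != k ->
  vanishes_at_zero_parts k f -> vanishes_at_zero_parts k (Hecke i f).
Proof.
move=> lt_in neq_ik f0 nu i0 lt_i0k nu_i0.
pose a : 'I_n := Ordinal (ltnW lt_in); pose b : 'I_n := Ordinal lt_in.
have tilde_ab_neq0 : tilde nu a - tilde nu b != 0 by rewrite subr_eq0 tilde_adj_neq.
suff : (tilde nu a - tilde nu b) * (Hecke i f).@[tilde nu] = 0.
  by move/eqP; rewrite mulf_eq0 (negbTE tilde_ab_neq0) => /eqP.
rewrite meval_Hecke (f0 nu i0) // mulr0 sub0r.
have [eq_nu|neq_nu] := eqVneq (nu a) (nu b).
  by rewrite (tilde_adj_eq eq_nu) subrr mul0r oppr0.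
rewrite (meval_eq _ (fun j => tilde_sperm j neq_nu)) (f0 _ (sperm n i i0)).
- by rewrite subrr mulr0 oppr0.
- rewrite (val_sperm lt_in) /swapn; move: lt_i0k neq_ik.
  by case: (nat_of_ord i0 =P i); case: (nat_of_ord i0 =P i.+1); lia.
- by rewrite mnmE (val_sperm lt_in) swapnK mnm_funE.
Qed.

Lemma Hecke_word_vanishing n k (w : seq nat) (f : {mpoly QqtK[n]}) :
  all (fun i => i.+1 < n)%N w -> all (fun i => i.+1 != k) w ->
  vanishes_at_zero_parts k f -> vanishes_at_zero_parts k (Hecke_word w f).
Proof.
elim: w => [|i w IH] //= /andP[lt_in all_w] /andP[neq_ik all_neq] f0.
by apply: Hecke_vanishing => //; apply: IH.
Qed.

Lemma Estar_vanishes_at_zero_parts n k (lam : 'X_{1..n}) E :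
  (forall i : 'I_n, (i < k)%N -> (0 < lam i)%N) -> is_Estar lam E ->
  vanishes_at_zero_parts k E.
Proof.
move=> lam_pos EE nu i0 lt_i0k nu_i0; apply: (Estar_extra_vanishing EE nu_i0) => j le_ji0.
by rewrite lam_pos // (leq_ltn_trans le_ji0 lt_i0k).
Qed.

Lemma not_preceq_zero_part n k (mu nu : 'X_{1..n}) (i0 : 'I_n) :
  (forall i : 'I_n, (0 < mu i)%N = (i < k)%N) -> (i0 < k)%N -> nu i0 = 0%N -> ~ preceq mu nu.
Proof.
move=> mu_pos lt_i0k nu_i0 [pi le_pi]; pose j := (pi^-1 i0)%g.
have [le_mu_nu lt_mu_nu] := le_pi j; rewrite /j permKV nu_i0 in le_mu_nu lt_mu_nu.
have mu_j0 : mu j = 0%N by apply/eqP; rewrite -leqn0.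
have lt_i0j : (i0 < j)%N by apply: leq_trans lt_i0k _; rewrite leqNgt -mu_pos mu_j0.
by have := lt_mu_nu lt_i0j; rewrite mu_j0.
Qed.

Unset Implicit Arguments.
Local Close Scope ring_scope.

Theorem lemma3p10 (n k : nat) (mu nu : 'X_{1..n}) :
  1 <= k <= n ->
  (forall i : 'I_n, i < k -> mu i != 0) ->
  (forall i : 'I_n, k <= i -> mu i = 0) ->
  (exists i0 : 'I_n, i0 < k /\ nu i0 = 0) ->
  [/\ ~ preceq mu nu,
      (forall E : {mpoly QqtK[n]}, is_Estar mu E -> E.@[tilde nu] = 0%R)
    & (forall F : {mpoly QqtK[n]}, is_fstar mu F -> F.@[tilde nu] = 0%R)].
Proof.
move=> /andP[_ le_kn] mu_nz mu_z [i0 [lt_i0k nu_i0]].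
have mu_pos (i : 'I_n) : (0 < mu i) = (i < k).
  by case: (ltnP i k) => [/mu_nz|/mu_z->]; rewrite ?lt0n.
have lam_pos := sorted_part_packed le_kn mu_pos.
split.
- exact: not_preceq_zero_part mu_pos lt_i0k nu_i0.
- move=> E EE; apply: Estar_vanishes_at_zero_parts EE _ i0 lt_i0k nu_i0 => i.
  by rewrite mu_pos.
move=> F [E [s [w [EE [act_s _] red_w ->]]]]; have [all_w _ _] := red_w.
have avoid_k := reduced_word_block_avoid red_w (act_comp_block lam_pos mu_pos act_s).
apply: Hecke_word_vanishing all_w avoid_k _ _ _ lt_i0k nu_i0.
by apply: Estar_vanishes_at_zero_parts EE => i; rewrite lam_pos.
Qed.
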